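(* Let $G$ be a finite simple undirected bipartite graph with $n$ vertices, and let $m$ be a nonnegative integer such that $G$ does not contain more than $m$ pairwise vertex-disjoint $4k$-cycles. Then \[ \operatorname{per}(G)=\begin{cases} (-1)^{n/2}\displaystyle\sum_{z=0}^{m}\frac{4^z}{z!}\sum_{T_z}\det(G\setminus T_z), & \text{if } n \text{ is even},\\[2mm] 0, & \text{if } n \text{ is odd},\end{cases} \] where, for each $z$, the inner sum runs over all ordered tuples $T_z=(R_1,\dots,R_z)$ of $z$ mutually vertex-disjoint $4k$-cycles of $G$.
   Context: For a graph $G$ with vertex set $\{v_1,\dots,v_n\}$, the adjacency matrix $A(G)=(a_{ij})$ is the $n\times n$ matrix with $a_{ij}=1$ if $v_i$ and $v_j$ are adjacent and $a_{ij}=0$ otherwise. $\det(G)$ and $\operatorname{per}(G)$ denote the determinant and permanent of $A(G)$, where $\operatorname{per}(M)=\sum_{\sigma\in S_n}\prod_{i=1}^n a_{i,\sigma(i)}$. A cycle of length $l$ is a sequence of distinct vertices $u_1,\dots,u_l$ with $u_i\sim u_{i+1}$ for $i<l$ and $u_l\sim u_1$ (considered as a subgraph); a $4k$-cycle is a cycle whose length is a positive multiple of $4$. For a tuple $T_z$ of vertex-disjoint cycles, $\det(G\setminus T_z)$ denotes the determinant of the principal submatrix of $A(G)$ obtained by deleting the rows and columns corresponding to all vertices lying on the cycles of $T_z$ (the determinant of the empty matrix being $1$). For $z=0$ the only tuple is the empty tuple $T_0$, so the $z=0$ term is $\det(G)$. *)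

From mathcomp Require Import all_boot all_order all_fingroup all_algebra.
Set Implicit Arguments.
Unset Strict Implicit.
Unset Printing Implicit Defensive.
Import GRing.Theory.
Local Open Scope ring_scope.

Definition simple_graph (n : nat) (e : rel 'I_n) : Prop :=
  symmetric e /\ irreflexive e.

Definition bipartite (n : nat) (e : rel 'I_n) : Prop :=
  exists f : 'I_n -> bool, forall i j, e i j -> f i != f j.

Definition adjmx (n : nat) (e : rel 'I_n) : 'M[rat]_n :=
  \matrix_(i, j) (e i j)%:R.

Definition permanent (R : comNzRingType) (k : nat) (M : 'M[R]_k) : R :=
  \sum_(s : 'S_k) \prod_(i < k) M i (s i).

Definition principal_submx (R : Type) (n : nat) (A : 'M[R]_n)
    (S : {set 'I_n}) : 'M[R]_#|S| :=
  \matrix_(i, j) A (enum_val i) (enum_val j).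

Definition cyc_edges (n : nat) (s : seq 'I_n) : {set {set 'I_n}} :=
  [set [set x; next s x] | x in s].

(* A cycle (as a subgraph, i.e. its edge set C) whose length is a positive
   multiple of 4: C is the edge set of u_1,...,u_l, distinct vertices with
   u_i ~ u_{i+1} and u_l ~ u_1, where 0 < l and 4 | l. *)
Definition is_4kcycle (n : nat) (e : rel 'I_n) (C : {set {set 'I_n}}) : bool :=
  [exists l : 'I_n.+1,
     [&& (0 < (l : nat))%N, (4 %| l)%N &
      [exists s : l.-tuple 'I_n,
         [&& uniq s, path.cycle e s & C == cyc_edges s]]]].

Definition cyc_verts (n : nat) (C : {set {set 'I_n}}) : {set 'I_n} :=
  \bigcup_(x in C) x.

Definition disj_4kcycle_tuple (n : nat) (e : rel 'I_n) (z : nat)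
    (t : z.-tuple {set {set 'I_n}}) : bool :=
  all (is_4kcycle e) t &&
  [forall i : 'I_z, forall j : 'I_z,
     (i != j) ==> [disjoint cyc_verts (tnth t i) & cyc_verts (tnth t j)]].

Definition tuple_verts (n : nat) (z : nat) (t : z.-tuple {set {set 'I_n}})
  : {set 'I_n} := \bigcup_(i < z) cyc_verts (tnth t i).

Definition det_del (n : nat) (e : rel 'I_n) (z : nat)
    (t : z.-tuple {set {set 'I_n}}) : rat :=
  \det (principal_submx (adjmx e) (~: tuple_verts t)).

(** A permutation s contributes to per(G) iff every x is adjacent to s x.  In a
    bipartite graph every cycle of such an s has even length, so n is even and
    (-1)^(n/2) sgn s = (-1)^c, where c <= m is the number of cycles of s whose
    length is a multiple of 4.  Expanding 1 = (-1)^c (1 - 2)^c binomially, the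
    term of index z counts, with weight 2^z/z!, the ordered z-tuples u of such
    cycles; since a 4k-cycle is an odd permutation, (-1)^(c+z) = (-1)^(n/2) sgn s',
    where s' is s with the cycles of u removed.  Summing over s and exchanging
    the sums, for a fixed tuple u of disjoint directed 4k-cycles the permutations
    s' are exactly the terms of det(G \ u).  Every 4k-cycle of G has exactly two
    orientations, which turns 2^z into 4^z. *)

From mathcomp Require Import all_boot all_order all_fingroup all_algebra.
From mathcomp Require Import ring.
Import GRing.Theory Num.Theory.

Set Implicit Arguments.
Unset Strict Implicit.
Unset Printing Implicit Defensive.

(** * Cycles of permutations *)

Section PermOrbits.
Local Open Scope group_scope.
Variable T : finType.
Implicit Types (s p : {perm T}) (x y : T).

Lemma porbit_iterP s x y : reflect (exists i, y = iter i s x) (y \in porbit s x).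
Proof. by apply: (iffP (porbitP s x y)) => -[i ->]; exists i; rewrite permX. Qed.

Lemma porbit_closed s x y : (s y \in porbit s x) = (y \in porbit s x).
Proof.
by have := porbit_perm s 1 y; rewrite expg1 porbit_sym => ->; rewrite porbit_sym.
Qed.

Lemma porbit_fix s x : s x = x -> porbit s x = [set x].
Proof.
move=> sx; apply/setP=> y; rewrite inE; apply/porbit_iterP/eqP => [[i ->]|->].
  by elim: i => //= i ->.
by exists 0.
Qed.

Lemma card_porbit_le2 s x : s (s x) = x -> #|porbit s x| <= 2.
Proof.
move=> ssx; apply: (@leq_trans #|[set x; s x]|); last by rewrite cards2; case: eqP.
apply/subset_leq_card/subsetP => y /porbit_iterP[i ->].
elim: i => [|i IH] /=; first by rewrite set21.
by case/set2P: IH => ->; rewrite ?ssx ?set21 ?set22.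
Qed.

Lemma porbit_fconnect s x y : (y \in porbit s x) = fconnect s x y.
Proof.
apply/porbit_iterP/idP => [[i ->]|xy]; first exact: fconnect_iter.
by exists (findex s x y); rewrite iter_findex.
Qed.

Lemma card_porbit_order s x : #|porbit s x| = fingraph.order s x.
Proof. by apply: eq_card => y; rewrite porbit_fconnect. Qed.

Lemma eq_in_porbit s p x : {in porbit s x, p =1 s} -> porbit p x = porbit s x.
Proof.
move=> eq_ps; have iterE i : iter i p x = iter i s x.
  by elim: i => //= i ->; rewrite eq_ps //; apply/porbit_iterP; exists i.
by apply/setP => y; apply/porbit_iterP/porbit_iterP => -[i ->]; exists i.
Qed.

Lemma sum_card_porbits s : \sum_(O in porbits s) #|O| = #|T|.
Proof.
have acts : [acts <[s]>%g, on [set: T] | 'P] by apply/actsP => g _ x; rewrite !inE.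
have := orbit_partition acts.
rewrite (_ : [set _ | x in _] = porbits s) => [/card_partition <-|]; first by rewrite cardsT.
by apply/setP => O; apply/imsetP/imsetP => -[x _ ->]; exists x; rewrite ?porbitE.
Qed.

Lemma odd_perm_porbits s : odd_perm s = odd (\sum_(O in porbits s) #|O|.-1).
Proof.
rewrite /odd_perm -{1}(sum_card_porbits s).
have -> : \sum_(O in porbits s) #|O| = \sum_(O in porbits s) #|O|.-1 + #|porbits s|.
  rewrite -sum1_card -big_split /=; apply: eq_bigr => O /imsetP[x _ ->].
  by rewrite addn1 prednK // lt0n card_porbit_neq0.
by rewrite oddD -addbA addbb addbF.
Qed.

Definition psupp s : {set T} := [set x | s x != x].

Lemma psupp_perm s x : (s x \in psupp s) = (x \in psupp s).
Proof. by rewrite !inE (inj_eq perm_inj). Qed.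

Lemma psupp_invperm s x : (s^-1 x \in psupp s) = (x \in psupp s).
Proof. by rewrite -{2}(permKV s x) psupp_perm. Qed.

Lemma psuppV s : psupp s^-1 = psupp s.
Proof.
apply/setP => x; rewrite !inE; congr negb.
by apply/eqP/eqP => [{1}<-|{1}<-]; rewrite ?permKV ?permK.
Qed.

Lemma notin_psupp s x : (x \notin psupp s) = (s x == x).
Proof. by rewrite inE negbK. Qed.

End PermOrbits.

Section CycleOf.
Local Open Scope group_scope.
Variables (T : finType) (s : {perm T}) (x0 : T).

Definition cycle_of_fun x := if x \in porbit s x0 then s x else x.

Lemma cycle_of_fun_inj : injective cycle_of_fun.
Proof.
move=> x y; rewrite /cycle_of_fun.
case: ifP => xO; case: ifP => yO; [exact: perm_inj| | |by []] => xy.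
  by move: yO; rewrite -xy porbit_closed xO.
by move: xO; rewrite xy porbit_closed yO.
Qed.

Definition cycle_of : {perm T} := perm cycle_of_fun_inj.

Lemma cycle_ofE x : cycle_of x = if x \in porbit s x0 then s x else x.
Proof. by rewrite permE. Qed.

Lemma porbit_cycle_of : porbit cycle_of x0 = porbit s x0.
Proof. by apply: eq_in_porbit => y yO; rewrite cycle_ofE yO. Qed.

Lemma psupp_cycle_of : (1 < #|porbit s x0|)%N -> psupp cycle_of = porbit s x0.
Proof.
move=> O_gt1; apply/setP => x; rewrite inE cycle_ofE; case: ifP => xO; last by rewrite eqxx.
apply: contraTN O_gt1 => /eqP/porbit_fix sx.
have /eqP <- : porbit s x == porbit s x0 by rewrite eq_porbit_mem xO.
by rewrite sx cards1.
Qed.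

End CycleOf.

Lemma set2_inj (T : finType) (a b c d : T) : [set a; b] = [set c; d] ->
  (a = c /\ b = d) \/ (a = d /\ b = c).
Proof.
move=> abcd.
have ha : a \in [set c; d] by rewrite -abcd set21.
have hb : b \in [set c; d] by rewrite -abcd set22.
have hc : c \in [set a; b] by rewrite abcd set21.
have hd : d \in [set a; b] by rewrite abcd set22.
case/set2P: ha => ?; case/set2P: hb => ?; subst; [left|left|right|left] => //.
  by case/set2P: hd => ->.
by case/set2P: hc => ->.
Qed.

Section NextPerm.
Variables (T : finType) (s : seq T) (uniq_s : uniq s).

Definition next_perm : {perm T} := perm (can_inj (prev_next uniq_s)).

Lemma next_permE x : next_perm x = next s x.
Proof. by rewrite permE. Qed.

Lemma porbit_next_perm x0 : x0 \in s -> porbit next_perm x0 =i s.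
Proof.
move=> x0s y; rewrite porbit_fconnect (eq_fconnect next_permE).
by rewrite (fconnect_cycle (cycle_next uniq_s) x0s).
Qed.

Lemma psupp_next_perm : (1 < size s)%N -> psupp next_perm =i s.
Proof.
move=> s_gt1 x; rewrite inE next_permE.
have [xs|xs] := boolP (x \in s); last by rewrite next_nth (negbTE xs) eqxx.
apply: contraTneq s_gt1 => /esym sx; rewrite -leqNgt -(card_uniqP uniq_s).
rewrite -(eq_card (porbit_next_perm xs)) porbit_fix ?cards1 //.
by rewrite next_permE.
Qed.

End NextPerm.

Section DisjointProduct.
Local Open Scope group_scope.
Variable T : finType.
Implicit Types (us : seq {perm T}) (p q : {perm T}) (x : T).

Definition perm_prod us : {perm T} := \prod_(p <- us) p.

Lemma perm_prod_out us x : (forall p, p \in us -> x \notin psupp p) -> perm_prod us x = x.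
Proof.
elim: us => [|q us IH] x_out; first by rewrite /perm_prod big_nil perm1.
rewrite /perm_prod big_cons permM (eqP _ : q x = x) -?notin_psupp ?x_out ?mem_head //.
by apply: IH => p pu; rewrite x_out // inE pu orbT.
Qed.

Lemma perm_prod_in us p x : uniq us ->
  {in us &, forall p q, p != q -> [disjoint psupp p & psupp q]} ->
  p \in us -> x \in psupp p -> perm_prod us x = p x.
Proof.
elim: us => // q us IH /andP[q_us uniq_us] disj pu xp.
rewrite /perm_prod big_cons permM -/(perm_prod us).
have disj_us : {in us &, forall p q, p != q -> [disjoint psupp p & psupp q]}.
  by move=> p1 q1 p1u q1u; apply: disj; rewrite inE ?p1u ?q1u orbT.
have [pq|pq] := eqVneq p q.
  subst p; apply: perm_prod_out => r ru; have qr : q != r by apply: contraNneq q_us => ->.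
  have ru' : r \in q :: us by rewrite inE ru orbT.
  by rewrite (disjointFr (disj _ _ (mem_head _ _) ru' qr)) // psupp_perm.
have pu' : p \in us by move: pu; rewrite inE (negbTE pq).
have /eqP -> : q x == x.
  by rewrite -notin_psupp (disjointFr (disj _ _ pu (mem_head _ _) pq)).
exact: IH.
Qed.

End DisjointProduct.

(** * Principal minors *)

Section PrincipalMinor.
Local Open Scope group_scope.
Variables (n : nat) (S : {set 'I_n}).
Local Notation k := #|S|.
Local Notation g := (@enum_val _ (mem S)).

Definition ext_perm_fun (p : 'S_k) (x : 'I_n) : 'I_n :=
  if [pick i | g i == x] is Some i then g (p i) else x.

Lemma ext_perm_funE p i : ext_perm_fun p (g i) = g (p i).
Proof.
by rewrite /ext_perm_fun; case: pickP => [j /eqP/enum_val_inj -> //|/(_ i)]; rewrite eqxx.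
Qed.

Lemma ext_perm_funN p x : x \notin S -> ext_perm_fun p x = x.
Proof.
move=> xS; rewrite /ext_perm_fun; case: pickP => // j /eqP gj.
by case/negP: xS; rewrite -gj enum_valP.
Qed.

Lemma in_enum_val x : x \in S -> exists i, x = g i.
Proof. by move=> xS; exists (enum_rank_in xS x); rewrite enum_rankK_in. Qed.

Lemma ext_perm_fun_inj p : injective (ext_perm_fun p).
Proof.
move=> x y.
have [xS|xS] := boolP (x \in S); have [yS|yS] := boolP (y \in S).
- have [[i ->] [j ->]] := (in_enum_val xS, in_enum_val yS).
  by rewrite !ext_perm_funE => /enum_val_inj/perm_inj ->.
- have [i ->] := in_enum_val xS; rewrite ext_perm_funE ext_perm_funN // => gy.
  by case/negP: yS; rewrite -gy enum_valP.
- have [i ->] := in_enum_val yS; rewrite ext_perm_funE ext_perm_funN // => xg.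
  by case/negP: xS; rewrite xg enum_valP.
- by rewrite !ext_perm_funN.
Qed.

Definition ext_perm (p : 'S_k) : 'S_n := perm (@ext_perm_fun_inj p).

Lemma ext_permE p i : ext_perm p (g i) = g (p i).
Proof. by rewrite permE ext_perm_funE. Qed.

Lemma ext_permN p x : x \notin S -> ext_perm p x = x.
Proof. by move=> xS; rewrite permE ext_perm_funN. Qed.

Lemma eq_ext_perm (q r : 'S_n) : {in ~: S, q =1 id} -> {in ~: S, r =1 id} ->
  (forall i, q (g i) = r (g i)) -> q = r.
Proof.
move=> q1 r1 qr; apply/permP => x; have [xS|xS] := boolP (x \in S).
  by have [i ->] := in_enum_val xS.
by rewrite q1 ?r1 ?inE.
Qed.

Lemma ext_perm_on p : perm_on S (ext_perm p).
Proof. by apply/subsetP => x; rewrite inE; apply: contraR => /ext_permN ->. Qed.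

Lemma ext_perm_inj : injective ext_perm.
Proof.
move=> p q pq; apply/permP => i; apply: enum_val_inj.
by rewrite -!ext_permE pq.
Qed.

Lemma ext_permM p q : ext_perm (p * q) = ext_perm p * ext_perm q.
Proof.
apply: eq_ext_perm => [x|x|i]; last by rewrite permM !ext_permE permM.
  by rewrite inE => /ext_permN.
by rewrite inE permM => xS; rewrite !ext_permN.
Qed.

Lemma ext_perm1 : ext_perm 1 = 1.
Proof. by apply: (mulgI (ext_perm 1)); rewrite -ext_permM !mulg1. Qed.

Lemma ext_permT i j : ext_perm (tperm i j) = tperm (g i) (g j).
Proof.
apply: eq_ext_perm => [x|x|l]; last by rewrite ext_permE (inj_tperm _ _ _ enum_val_inj).
  by rewrite inE => /ext_permN.
rewrite inE => xS; rewrite tpermD //; apply: contraNneq xS => <-; exact: enum_valP.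
Qed.

Lemma odd_ext_perm p : odd_perm (ext_perm p) = odd_perm p.
Proof.
have [ts -> tsP] := prod_tpermP p.
have -> : ext_perm (\prod_(t <- ts) tperm t.1 t.2) =
          \prod_(t <- map (fun t => (g t.1, g t.2)) ts) tperm t.1 t.2.
  rewrite big_map; elim: ts {tsP} => [|t ts IH]; first by rewrite !big_nil ext_perm1.
  by rewrite !big_cons ext_permM IH ext_permT.
rewrite !odd_perm_prod ?size_map // all_map.
by apply: sub_all tsP => t /=; rewrite (inj_eq enum_val_inj).
Qed.

Lemma ext_perm_onto : ext_perm @: setT = [set s | perm_on S s].
Proof.
apply/eqP; rewrite eqEcard; apply/andP; split.
  by apply/subsetP => _ /imsetP[p _ ->]; rewrite inE ext_perm_on.
rewrite card_in_imset; last by move=> p q _ _ /ext_perm_inj.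
by rewrite cardsT card_Sn cardsE card_perm.
Qed.

End PrincipalMinor.

Local Open Scope ring_scope.

Lemma det_principal_submx (R : comNzRingType) n (A : 'M[R]_n) (S : {set 'I_n}) :
  \det (principal_submx A S) =
  \sum_(s : 'S_n | perm_on S s) (-1) ^+ s * \prod_(x in S) A x (s x).
Proof.
have -> : \sum_(s : 'S_n | perm_on S s) (-1) ^+ s * \prod_(x in S) A x (s x) =
          \sum_(s in @ext_perm n S @: setT) (-1) ^+ s * \prod_(x in S) A x (s x).
  by apply: eq_bigl => s; rewrite ext_perm_onto inE.
rewrite big_imset /=; last by move=> p q _ _ /ext_perm_inj.
apply: eq_big => [p|p _]; first by rewrite inE.
rewrite odd_ext_perm [in RHS]big_enum_val /=.
by congr (_ * _); apply: eq_bigr => i _; rewrite mxE ext_permE.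
Qed.

(** * Counting tuples *)

Lemma sum_uniq_tuples_exp (R : numFieldType) (T : finType) (A : {set T}) m (a : R) :
  (#|A| <= m)%N ->
  \sum_(z < m.+1) a ^+ z / z`!%:R * #|[set t : z.-tuple T | all (mem A) t & uniq t]|%:R
    = (1 + a) ^+ #|A|.
Proof.
move=> A_le_m; rewrite exprDn.
have term z : a ^+ z / z`!%:R * #|[set t : z.-tuple T | all (mem A) t & uniq t]|%:R
              = 1 ^+ (#|A| - z) * a ^+ z *+ 'C(#|A|, z).
  rewrite card_uniq_tuples expr1n mul1r; have [z_le|z_gt] := leqP z #|A|; last first.
    by rewrite ffact_small ?bin_small // mulr0 mulr0n.
  have fact_neq0 : z`!%:R != 0 :> R by rewrite pnatr_eq0 -lt0n fact_gt0.
  by rewrite -bin_ffact natrM -mulr_natr; field.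
rewrite (eq_bigr (fun z : 'I_m.+1 => 1 ^+ (#|A| - z) * a ^+ z *+ 'C(#|A|, z))) => [|z _];
  last exact: term.
rewrite -(big_mkord xpredT (fun z => 1 ^+ (#|A| - z) * a ^+ z *+ 'C(#|A|, z))).
rewrite (big_cat_nat _ (n := #|A|.+1)) //=.
rewrite [X in _ + X]big1_seq ?addr0 ?big_mkord // => z /andP[_].
by rewrite mem_index_iota => /andP[/bin_small -> _].
Qed.

Lemma prodr_natb (R : comNzRingType) (I : finType) (P b : pred I) :
  \prod_(i | P i) (b i)%:R = [forall i, P i ==> b i]%:R :> R.
Proof.
case: forallP => [Pb|]; first by rewrite big1 // => i /(implyP (Pb i)) ->.
move=> /forallP; rewrite -negb_forall => /existsP[i]; rewrite negb_imply => /andP[Pi bi].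
by rewrite (bigD1 i) //= (negbTE bi) mul0r.
Qed.

Lemma sum1_tuples_pointwise (R : comNzRingType) (T : finType) z (P : 'I_z -> pred T) :
  \sum_(u : z.-tuple T | [forall i, P i (tnth u i)]) 1 = \prod_(i < z) #|P i|%:R :> R.
Proof.
have -> : \prod_(i < z) #|P i|%:R = \prod_(i < z) \sum_(q : T) (P i q)%:R :> R.
  apply: eq_bigr => i _; rewrite -sum1_card natr_sum big_mkcond /=.
  by apply: eq_bigr => q _; rewrite unfold_in; case: (P i q).
rewrite bigA_distr_bigA /= (reindex (fun u : z.-tuple T => [ffun i => tnth u i])) /=.
  rewrite big_mkcond /=; apply: eq_bigr => u _.
  rewrite (eq_bigr (fun i => (P i (tnth u i))%:R)) => [|i _]; last by rewrite ffunE.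
  by rewrite prodr_natb (eq_forallb (fun i => implyTb _)); case: ifP.
exists (fun f : {ffun 'I_z -> T} => [tuple f i | i < z]) => [u _|f _].
  by apply: eq_from_tnth => i; rewrite tnth_mktuple ffunE.
by apply/ffunP => i; rewrite ffunE tnth_mktuple.
Qed.

(** * Directed 4k-cycles *)

Section DirectedCycles.
Local Open Scope group_scope.
Variables (n : nat) (e : rel 'I_n).
Implicit Types (p q : 'S_n) (x y : 'I_n).

(* A 4k-cycle of e traversed in one direction, as the cyclic permutation it induces. *)
Definition dcycle4k p : bool :=
  [&& [exists x, psupp p == porbit p x], (4 %| #|psupp p|)%N &
      [forall x in psupp p, e x (p x)]].

Definition perm_edges p : {set {set 'I_n}} := [set [set x; p x] | x in psupp p].

Lemma dcycle4k_psupp p x : dcycle4k p -> x \in psupp p -> psupp p = porbit p x.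
Proof.
case/and3P => /existsP[x0 /eqP ->] _ _ xO; apply/eqP.
by rewrite eq_sym eq_porbit_mem.
Qed.

Lemma dcycle4k_psupp_neq0 p : dcycle4k p -> psupp p != set0.
Proof.
by case/and3P => /existsP[x0 /eqP ->] _ _; apply/set0Pn; exists x0; exact: porbit_id.
Qed.

Lemma dcycle4k_card p : dcycle4k p -> (4 <= #|psupp p|)%N.
Proof.
move=> dp; have := dcycle4k_psupp_neq0 dp; rewrite -card_gt0.
by case/and3P: dp => _ /dvdnP[[|k] ->].
Qed.

Lemma dcycle4k_edge p x : dcycle4k p -> x \in psupp p -> e x (p x).
Proof. by case/and3P => _ _ /forall_inP; apply. Qed.

Lemma dcycle4k_perm2 p x : dcycle4k p -> x \in psupp p -> p (p x) != x.
Proof.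
move=> dp xp; apply/eqP => /card_porbit_le2; rewrite -(dcycle4k_psupp dp xp).
by rewrite leqNgt (leq_trans _ (dcycle4k_card dp)).
Qed.

Lemma odd_dcycle4k p : dcycle4k p -> odd_perm p.
Proof.
move=> dp; have /set0Pn[x0 x0p] := dcycle4k_psupp_neq0 dp.
rewrite odd_perm_porbits (bigD1 (psupp p)) /=; last first.
  by rewrite (dcycle4k_psupp dp x0p) imset_f.
rewrite big1 ?addn0 => [|O /andP[/imsetP[y _ ->] O_neq]]; last first.
  have [yp|/[!notin_psupp]/eqP/porbit_fix->] := boolP (y \in psupp p); last by rewrite cards1.
  by case/eqP: O_neq; rewrite (dcycle4k_psupp dp yp).
have := dcycle4k_card dp; case/and3P: dp => _ /dvdnP[[|k] ->] // _ _.
by rewrite mulSn addnC -subn1 -addnBA // oddD oddM andbF.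
Qed.

Lemma cyc_verts_perm_edges p : cyc_verts (perm_edges p) = psupp p.
Proof.
apply/setP => y; apply/bigcupP/idP => [[X /imsetP[x xp ->]]|yp].
  by case/set2P => ->; rewrite ?psupp_perm.
by exists [set y; p y]; [apply/imsetP; exists y | rewrite set21].
Qed.

Lemma perm_edgesV p : perm_edges p^-1 = perm_edges p.
Proof.
apply/setP => X; apply/imsetP/imsetP => -[x xp ->].
  by exists (p^-1 x); rewrite ?permKV 1?setUC // psupp_invperm -psuppV.
by exists (p x); rewrite ?permK 1?setUC // psuppV psupp_perm.
Qed.

Lemma perm_edges_local p q x : perm_edges q = perm_edges p -> x \in psupp q ->
  q x = p x \/ q x = p^-1 x.
Proof.
move=> qp xq; have : [set x; q x] \in perm_edges p by rewrite -qp; apply/imsetP; exists x.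
case/imsetP => y _ /set2_inj[[-> ->]|[-> ->]]; [left|right] => //.
by rewrite permK.
Qed.

Lemma dcycle4k_rigid p q x0 : dcycle4k p -> dcycle4k q -> perm_edges q = perm_edges p ->
  x0 \in psupp p -> q x0 = p x0 -> q = p.
Proof.
move=> dp dq qp x0p qx0.
have psupp_qp : psupp q = psupp p by rewrite -!cyc_verts_perm_edges qp.
have iter_in i : iter i p x0 \in psupp p.
  by rewrite (dcycle4k_psupp dp x0p); apply/porbit_iterP; exists i.
have qp_iter i : q (iter i p x0) = p (iter i p x0).
  elim: i => // i IH /=; set y := iter i p x0.
  have pyq : p y \in psupp q by rewrite psupp_qp psupp_perm iter_in.
  case: (perm_edges_local qp pyq) => // qpy.
  have := dcycle4k_perm2 dq (x := y); rewrite psupp_qp iter_in => /(_ isT).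
  by rewrite IH qpy permK eqxx.
apply/permP => x; have [xp|xp] := boolP (x \in psupp p).
  by move: xp; rewrite (dcycle4k_psupp dp x0p) => /porbit_iterP[i ->].
have xq : x \notin psupp q by rewrite psupp_qp.
by move: xp xq; rewrite !notin_psupp => /eqP -> /eqP ->.
Qed.

Lemma mem_orbit_dcycle4k p x0 x : dcycle4k p -> x0 \in psupp p ->
  (x \in fingraph.orbit p x0) = (x \in psupp p).
Proof.
by move=> dp x0p; rewrite -fconnect_orbit -porbit_fconnect -(dcycle4k_psupp dp x0p).
Qed.

Lemma is_4kcycle_perm_edges p : dcycle4k p -> is_4kcycle e (perm_edges p).
Proof.
move=> dp; have /set0Pn[x0 x0p] := dcycle4k_psupp_neq0 dp.
have orbitE := mem_orbit_dcycle4k _ dp x0p.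
set s := fingraph.orbit p x0.
have size_s : size s = #|psupp p|.
  by rewrite size_orbit -card_porbit_order -(dcycle4k_psupp dp x0p).
have lt_l : (#|psupp p| < n.+1)%N by rewrite ltnS -[n in (_ <= n)%N]card_ord max_card.
have size_sl : size s == Ordinal lt_l by rewrite size_s.
have cycle_s : fcycle p s by apply/cycle_orbit/perm_inj.
have uniq_s : uniq s := orbit_uniq p x0.
apply/existsP; exists (Ordinal lt_l); apply/and3P; split => /=.
- exact: leq_trans (dcycle4k_card dp).
- by case/and3P: dp.
apply/existsP; exists (Tuple size_sl); apply/and3P; split => //=.
  apply: cycle_from_next => // x xs.
  by rewrite (nextE cycle_s xs) dcycle4k_edge // -orbitE.
apply/eqP/setP => X; apply/imsetP/imsetP => -[x xs ->]; exists x;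
  by rewrite ?orbitE ?(nextE cycle_s) ?orbitE // -orbitE.
Qed.

Hypothesis e_sym : symmetric e.

Lemma dcycle4kV p : dcycle4k p -> dcycle4k p^-1.
Proof.
move=> dp; have /set0Pn[x0 x0p] := dcycle4k_psupp_neq0 dp.
apply/and3P; split; rewrite psuppV.
- by apply/existsP; exists x0; rewrite porbitV (dcycle4k_psupp dp x0p).
- by case/and3P: dp.
- apply/forall_inP => x xp; have := dcycle4k_edge dp (x := p^-1 x).
  by rewrite permKV e_sym psupp_invperm; apply.
Qed.

Lemma dcycle4k_perm_edges_inj p q : dcycle4k p -> dcycle4k q ->
  perm_edges q = perm_edges p -> q = p \/ q = p^-1.
Proof.
move=> dp dq qp; have /set0Pn[x0 x0p] := dcycle4k_psupp_neq0 dp.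
have x0q : x0 \in psupp q by rewrite -cyc_verts_perm_edges qp cyc_verts_perm_edges.
case: (perm_edges_local qp x0q) => qx0; [left|right].
  exact: dcycle4k_rigid qx0.
apply: (dcycle4k_rigid (dcycle4kV dp) dq _ _ qx0); first by rewrite perm_edgesV.
by rewrite psuppV.
Qed.

Lemma dcycle4k_next_perm l (s : l.-tuple 'I_n) (uniq_s : uniq s) :
  (0 < l)%N -> (4 %| l)%N -> path.cycle e s -> dcycle4k (next_perm uniq_s).
Proof.
move=> l_gt0 l4 cycle_s.
have s_gt1 : (1 < size s)%N by rewrite size_tuple; case/dvdnP: l4 l_gt0 => [[|k] ->].
have psupp_r := psupp_next_perm uniq_s s_gt1.
have [x0 x0s] : exists x0, x0 \in s by exists (tnth s (Ordinal l_gt0)); exact: mem_tnth.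
apply/and3P; split.
- apply/existsP; exists x0; apply/eqP/setP => y.
  by rewrite psupp_r porbit_next_perm.
- by rewrite (eq_card psupp_r) (card_uniqP uniq_s) size_tuple.
- by apply/forall_inP => x; rewrite psupp_r next_permE; apply: next_cycle.
Qed.

Lemma dcycle4k_neqV p : dcycle4k p -> p != p^-1.
Proof.
move=> dp; have /set0Pn[x xp] := dcycle4k_psupp_neq0 dp.
by apply: contraTneq (dcycle4k_perm2 dp xp) => {1}->; rewrite permK eqxx.
Qed.

Lemma card_dcycle4k_orientations C : is_4kcycle e C ->
  #|[set q | dcycle4k q && (perm_edges q == C)]| = 2%N.
Proof.
case/existsP => l /and3P[l_gt0 l4 /existsP[s /and3P[uniq_s cycle_s /eqP ->]]].
have dr := dcycle4k_next_perm uniq_s l_gt0 l4 cycle_s; set r := next_perm uniq_s in dr *.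
have edges_r : perm_edges r = cyc_edges s.
  have psupp_r : psupp r =i s.
    by apply: psupp_next_perm; rewrite size_tuple; case/dvdnP: l4 l_gt0 => [[|k] ->].
  apply/setP => X; apply/imsetP/imsetP => -[x xs ->]; exists x;
    by rewrite ?psupp_r ?next_permE // -psupp_r.
rewrite (_ : [set q | _] = [set r; r^-1]) ?cards2 ?dcycle4k_neqV //.
apply/setP => q; rewrite !inE -edges_r.
apply/andP/orP => [[dq /eqP]|[/eqP->|/eqP->]]; rewrite ?perm_edgesV ?dcycle4kV //.
by case/(dcycle4k_perm_edges_inj dr dq) => ->; rewrite eqxx ?orbT; [left|right].
Qed.

End DirectedCycles.

Section DisjointDirectedCycles.
Variables (n : nat) (e : rel 'I_n).

Definition tuple_psupp z (u : z.-tuple 'S_n) : {set 'I_n} :=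
  \bigcup_(i < z) psupp (tnth u i).

Definition disj_dcycle4k_tuple z (u : z.-tuple 'S_n) : bool :=
  all (dcycle4k e) u &&
  [forall i, forall j, (i != j) ==> [disjoint psupp (tnth u i) & psupp (tnth u j)]].

Lemma tuple_verts_perm_edges z (u : z.-tuple 'S_n) :
  tuple_verts (map_tuple (@perm_edges n) u) = tuple_psupp u.
Proof. by apply: eq_bigr => i _; rewrite tnth_map cyc_verts_perm_edges. Qed.

Lemma disj_4kcycle_tuple_perm_edges z (u : z.-tuple 'S_n) :
  disj_dcycle4k_tuple u -> disj_4kcycle_tuple e (map_tuple (@perm_edges n) u).
Proof.
case/andP=> du disj_u; apply/andP; split.
  by rewrite all_map; apply: sub_all du => p /is_4kcycle_perm_edges.
apply/forallP => i; apply/forallP => j; apply/implyP => ij.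
rewrite !tnth_map !cyc_verts_perm_edges.
by move/forallP/(_ i)/forallP/(_ j)/implyP: disj_u; apply.
Qed.

Hypothesis e_sym : symmetric e.

Lemma sum1_tuple_orientations (R : comNzRingType) z (t : z.-tuple {set {set 'I_n}}) :
  disj_4kcycle_tuple e t ->
  \sum_(u : z.-tuple 'S_n | disj_dcycle4k_tuple u && (map_tuple (@perm_edges n) u == t)) 1
    = 2 ^+ z :> R.
Proof.
case/andP => /all_tnthP t4k disj_t.
pose P i q := dcycle4k e q && (perm_edges q == tnth t i).
rewrite (eq_bigl (fun u => [forall i, P i (tnth u i)])) => [|u].
  rewrite sum1_tuples_pointwise (eq_bigr (fun _ => 2%:R)) ?prodr_const ?card_ord // => i _.
  rewrite -(card_dcycle4k_orientations e_sym (t4k i)).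
  by congr _%:R; apply: eq_card => q; rewrite inE.
apply/andP/forallP => [[/andP[/all_tnthP du _] /eqP ut] i|uP].
  by rewrite /P -ut tnth_map eqxx du.
have edges_u i : perm_edges (tnth u i) = tnth t i by case/andP: (uP i) => _ /eqP.
have ut : map_tuple (@perm_edges n) u = t.
  by apply: eq_from_tnth => i; rewrite tnth_map.
split; last by rewrite ut.
apply/andP; split; first by apply/all_tnthP => i; case/andP: (uP i).
apply/forallP => i; apply/forallP => j; apply/implyP => ij.
rewrite -!cyc_verts_perm_edges !edges_u.
by move/forallP/(_ i)/forallP/(_ j)/implyP: disj_t; apply.
Qed.

Lemma sum_disj_dcycle4k_tuples (R : comNzRingType) z (F : {set 'I_n} -> R) :
  \sum_(u : z.-tuple 'S_n | disj_dcycle4k_tuple u) F (tuple_psupp u) =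
  2 ^+ z * \sum_(t : z.-tuple {set {set 'I_n}} | disj_4kcycle_tuple e t) F (tuple_verts t).
Proof.
rewrite (partition_big (fun u => map_tuple (@perm_edges n) u) (@disj_4kcycle_tuple n e z)) /=;
  last exact: disj_4kcycle_tuple_perm_edges.
rewrite mulr_sumr; apply: eq_bigr => t dt.
rewrite (eq_bigr (fun _ => 1 * F (tuple_verts t))) => [|u /andP[_ /eqP <-]]; last first.
  by rewrite tuple_verts_perm_edges mul1r.
by rewrite -big_distrl sum1_tuple_orientations.
Qed.

End DisjointDirectedCycles.

(** * Permutations along the edges of a bipartite graph *)

Section EdgePerms.
Local Open Scope group_scope.
Variables (n : nat) (e : rel 'I_n).
Implicit Types (p q s : 'S_n) (x : 'I_n).

Definition edge_perm s := [forall x, e x (s x)].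

Definition subcycle p s := [forall x in psupp p, s x == p x].

Definition dcycles4k s : {set 'S_n} := [set p | dcycle4k e p && subcycle p s].

Definition porbits4k s : {set {set 'I_n}} := [set O in porbits s | (4 %| #|O|)%N].

Lemma dcycles4k_psupp s p x : p \in dcycles4k s -> x \in psupp p -> psupp p = porbit s x.
Proof.
rewrite inE => /andP[dp /forall_inP sp] xp; rewrite (dcycle4k_psupp dp xp).
by symmetry; apply: eq_in_porbit => y; rewrite -(dcycle4k_psupp dp xp) => /sp/eqP.
Qed.

Lemma dcycles4k_psupp_inj s : {in dcycles4k s &, injective (@psupp _)}.
Proof.
move=> p q; rewrite !inE => /andP[_ /forall_inP sp] /andP[_ /forall_inP sq] pq.
apply/permP => x; have [xp|xp] := boolP (x \in psupp p).
  by rewrite -(eqP (sp x xp)) (eqP (sq x _)) // -pq.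
have xq : x \notin psupp q by rewrite -pq.
by move: xp xq; rewrite !notin_psupp => /eqP -> /eqP ->.
Qed.

Lemma dcycles4k_disjoint s p q : p \in dcycles4k s -> q \in dcycles4k s -> p != q ->
  [disjoint psupp p & psupp q].
Proof.
move=> pF qF; rewrite -setI_eq0; apply: contraR => /set0Pn[x /setIP[xp xq]].
apply/eqP/(dcycles4k_psupp_inj pF qF).
by rewrite (dcycles4k_psupp pF xp) (dcycles4k_psupp qF xq).
Qed.

Lemma psupp_dcycles4k s : edge_perm s -> (@psupp _) @: dcycles4k s = porbits4k s.
Proof.
move=> es; apply/setP => O; apply/imsetP/idP => [[p pF ->]|].
  have /andP[dp _] : dcycle4k e p && subcycle p s by rewrite inE in pF.
  have /set0Pn[x xp] := dcycle4k_psupp_neq0 dp.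
  rewrite inE (dcycles4k_psupp pF xp) imset_f //= -(dcycles4k_psupp pF xp).
  by case/and3P: dp.
rewrite inE => /andP[/imsetP[x0 _ ->] O4].
have O_gt1 : (1 < #|porbit s x0|)%N.
  by case/dvdnP: O4 (card_porbit_neq0 s x0) => [[|k] ->] //; rewrite mulSn.
have psupp_c := psupp_cycle_of O_gt1.
exists (cycle_of s x0); rewrite ?psupp_c // inE; apply/andP; split.
  apply/and3P; split; rewrite ?psupp_c //.
    by apply/existsP; exists x0; rewrite porbit_cycle_of.
  by apply/forall_inP => x xO; rewrite cycle_ofE xO; apply: (forallP es).
by apply/forall_inP => x; rewrite psupp_c cycle_ofE => ->.
Qed.

Lemma card_dcycles4k s : edge_perm s -> #|dcycles4k s| = #|porbits4k s|.
Proof.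
by move=> es; rewrite -(psupp_dcycles4k es) card_in_imset //; apply: dcycles4k_psupp_inj.
Qed.

Variable f : 'I_n -> bool.
Hypothesis f_bip : forall x y, e x y -> f x != f y.

Lemma bipartite_iter s x k : edge_perm s -> f (iter k s x) = f x (+) odd k.
Proof.
move=> es; elim: k => [|k IH] /=; first by rewrite addbF.
have := f_bip (forallP es (iter k s x)); rewrite IH.
by case: (f (s _)); case: (f x); case: (odd k).
Qed.

Lemma even_porbit s x : edge_perm s -> ~~ odd #|porbit s x|.
Proof.
move=> es; have := bipartite_iter x #|porbit s x| es; rewrite iter_porbit.
by case: (f x); case: (odd _).
Qed.

Lemma edge_perm_even s : edge_perm s -> ~~ odd n.
Proof.
move=> es; rewrite -[n]card_ord -(sum_card_porbits s).
elim/big_ind: _ => // [a b|O /imsetP[x _ ->]]; last exact: even_porbit.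
by rewrite oddD => /negbTE-> /negbTE->.
Qed.

Local Open Scope ring_scope.

Lemma sign_edge_perm (R : comNzRingType) s : edge_perm s ->
  (-1) ^+ n./2 * (-1) ^+ s = (-1) ^+ #|porbits4k s| :> R.
Proof.
move=> es.
(* A cycle of length 2a adds a to n/2 and 2a - 1 to the transposition count of s. *)
have sign_cycle a : (0 < a)%N ->
    (-1) ^+ (a + a.*2.-1) = (if (4 %| a.*2)%N then -1 else 1) :> R.
  have -> : (4 %| a.*2)%N = ~~ odd a by rewrite -muln2 -[4%N]/(2 * 2)%N dvdn_pmul2r // dvdn2.
  rewrite -signr_odd; case: a => // b _; rewrite doubleS /= oddD /= odd_double negbK.
  by case: (odd b).
have half_double O : O \in porbits s -> #|O| = (#|O|./2).*2.
  by case/imsetP => x _ ->; rewrite -[LHS]odd_double_half (negbTE (even_porbit x es)).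
have -> : n./2 = (\sum_(O in porbits s) #|O|./2)%N.
  have -> : n./2 = (\sum_(O in porbits s) #|O|)./2 by rewrite sum_card_porbits card_ord.
  by rewrite (eq_bigr _ half_double) -(big_morph double doubleD double0) doubleK.
rewrite odd_perm_porbits signr_odd -exprD -big_split /= -prodrXr.
rewrite (eq_bigr (fun O : {set 'I_n} => if (4 %| #|O|)%N then -1 else 1 : R)) => [|O sO].
  by rewrite -big_mkcondr prodr_const; congr (_ ^+ _); apply: eq_card => O; rewrite !inE.
have O_gt0 : (0 < #|O|)%N by case/imsetP: sO => x _ ->; rewrite lt0n card_porbit_neq0.
move: (half_double O sO) O_gt0; move: #|O| => k ->.
by rewrite doubleK double_gt0; apply: sign_cycle.
Qed.

End EdgePerms.

Section DisjointDirectedCycleProduct.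
Local Open Scope group_scope.
Variables (n : nat) (e : rel 'I_n).
Implicit Types (s p q : 'S_n) (x : 'I_n).

Lemma odd_perm_prod_dcycle4k (us : seq 'S_n) :
  all (dcycle4k e) us -> odd_perm (perm_prod us) = odd (size us).
Proof.
elim: us => [|q us IH]; first by rewrite /perm_prod big_nil odd_perm1.
by case/andP => dq dus; rewrite /perm_prod big_cons odd_permM IH // (odd_dcycle4k dq).
Qed.

Lemma tuple_psuppP z (u : z.-tuple 'S_n) x :
  reflect (exists2 p, p \in u & x \in psupp p) (x \in tuple_psupp u).
Proof.
apply: (iffP bigcupP) => [[i _ xp]|[p /tnthP[i ->] xp]]; last by exists i.
by exists (tnth u i); rewrite ?mem_tnth.
Qed.

Lemma disj_dcycle4k_tuple_disjoint z (u : z.-tuple 'S_n) : disj_dcycle4k_tuple e u ->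
  {in u &, forall p q, p != q -> [disjoint psupp p & psupp q]}.
Proof.
case/andP => _ /forallP disj_u p q /tnthP[i ->] /tnthP[j ->] uij.
have ij : i != j by apply: contraNneq uij => ->.
by move/forallP/(_ j)/implyP: (disj_u i); apply.
Qed.

Lemma disj_dcycle4k_tuple_uniq z (u : z.-tuple 'S_n) : disj_dcycle4k_tuple e u -> uniq u.
Proof.
move=> du; apply/tuple_uniqP => i j uij; apply/eqP/negPn/negP => ij.
case/andP: du => /all_tnthP/(_ i) di /forallP/(_ i)/forallP/(_ j)/implyP/(_ ij).
by rewrite -setI_eq0 -uij setIid (negbTE (dcycle4k_psupp_neq0 di)).
Qed.

Lemma perm_prod_tuple_in z (u : z.-tuple 'S_n) p x : disj_dcycle4k_tuple e u ->
  p \in u -> x \in psupp p -> perm_prod u x = p x.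
Proof.
move=> du; apply: perm_prod_in; first exact: disj_dcycle4k_tuple_uniq du.
exact: disj_dcycle4k_tuple_disjoint.
Qed.

Lemma perm_prod_tuple_out z (u : z.-tuple 'S_n) x :
  x \notin tuple_psupp u -> perm_prod u x = x.
Proof.
move=> xu; apply: perm_prod_out => p pu; apply: contra xu => xp.
by apply/tuple_psuppP; exists p.
Qed.

Lemma dcycles4k_tupleE s z (u : z.-tuple 'S_n) :
  all (fun p => p \in dcycles4k e s) u && uniq u =
  disj_dcycle4k_tuple e u && all (fun p => subcycle p s) u.
Proof.
apply/andP/andP => [[/allP uF uniq_u]|[du /allP us]]; split.
- apply/andP; split; first by apply/allP => p /uF; rewrite inE => /andP[].
  apply/forallP => i; apply/forallP => j; apply/implyP => ij.
  apply: (dcycles4k_disjoint (uF _ (mem_tnth i u)) (uF _ (mem_tnth j u))).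
  by apply: contra ij => /eqP/(tuple_uniqP u uniq_u) ->.
- by apply/allP => p /uF; rewrite inE => /andP[].
- by apply/allP => p pu; rewrite inE us // andbT; case/andP: du => /allP->.
- exact: disj_dcycle4k_tuple_uniq.
Qed.

Lemma edge_perm_factor z (u : z.-tuple 'S_n) s : disj_dcycle4k_tuple e u ->
  edge_perm e (perm_prod u * s) && all (fun p => subcycle p (perm_prod u * s)) u =
  perm_on (~: tuple_psupp u) s && [forall x in ~: tuple_psupp u, e x (s x)].
Proof.
move=> du; have dcycle_u p : p \in u -> dcycle4k e p by case/andP: du => /allP du _; apply: du.
have s_fix p x : perm_on (~: tuple_psupp u) s -> p \in u -> x \in psupp p -> s x = x.
  move=> s_on pu xp; apply: (out_perm s_on).
  by rewrite inE negbK; apply/tuple_psuppP; exists p.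
apply/andP/andP => [[/forallP es /allP us]|[s_on /forall_inP es]]; split.
- apply/subsetP => x; rewrite !inE; apply: contraR; rewrite negbK => /tuple_psuppP[p pu xp].
  have pxp : p^-1 x \in psupp p by rewrite psupp_invperm.
  have := forall_inP (us p pu) _ pxp.
  by rewrite permM (perm_prod_tuple_in du pu pxp) permKV => /eqP ->.
- apply/forall_inP => x; rewrite inE => xu.
  by have := es x; rewrite permM perm_prod_tuple_out.
- apply/forallP => x; rewrite permM.
  have [/tuple_psuppP[p pu xp]|xu] := boolP (x \in tuple_psupp u).
    by rewrite (perm_prod_tuple_in du pu xp) (s_fix p) ?psupp_perm ?dcycle4k_edge ?dcycle_u.
  by rewrite perm_prod_tuple_out ?es ?inE.
- apply/allP => p pu; apply/forall_inP => x xp.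
  by rewrite permM (perm_prod_tuple_in du pu xp) (s_fix p) ?psupp_perm.
Qed.

Lemma card_dcycles4k_le m s :
  (forall Cs : {set {set {set 'I_n}}},
     (forall C, C \in Cs -> is_4kcycle e C) ->
     (forall C D, C \in Cs -> D \in Cs -> C != D -> [disjoint cyc_verts C & cyc_verts D]) ->
     (#|Cs| <= m)%N) ->
  (#|dcycles4k e s| <= m)%N.
Proof.
move=> cycles_le; have edges_inj : {in dcycles4k e s &, injective (@perm_edges n)}.
  move=> p q pF qF pq; apply: (dcycles4k_psupp_inj pF qF).
  by rewrite -!cyc_verts_perm_edges pq.
rewrite -(card_in_imset edges_inj); apply: cycles_le.
  by move=> _ /imsetP[p + ->]; rewrite inE => /andP[/is_4kcycle_perm_edges].
move=> _ _ /imsetP[p pF ->] /imsetP[q qF ->] pq.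
rewrite !cyc_verts_perm_edges; apply: (dcycles4k_disjoint pF qF).
by apply: contraNneq pq => ->.
Qed.

End DisjointDirectedCycleProduct.

(** * Expansion of the permanent *)

Section Expansion.
Variables (n : nat) (e : rel 'I_n).

Lemma permanent_adjmxE : permanent (adjmx e) = \sum_(s : 'S_n | edge_perm e s) 1.
Proof.
rewrite big_mkcond; apply: eq_bigr => s _.
rewrite (eq_bigr (fun x => (e x (s x))%:R)) => [|x _]; last by rewrite mxE.
by rewrite prodr_natb (eq_forallb (fun x => implyTb _)) /edge_perm; case: ifP.
Qed.

Lemma det_principal_adjmx (W : {set 'I_n}) :
  \det (principal_submx (adjmx e) W) =
  \sum_(s : 'S_n | perm_on W s && [forall x in W, e x (s x)]) (-1) ^+ s.
Proof.
rewrite det_principal_submx big_mkcondr /=; apply: eq_bigr => s _.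
rewrite (eq_bigr (fun x => (e x (s x))%:R)) => [|x _]; last by rewrite mxE.
by rewrite prodr_natb; case: ifP; rewrite ?mulr1 ?mulr0.
Qed.

Lemma sum_edge_perms_through z (u : z.-tuple 'S_n) : disj_dcycle4k_tuple e u ->
  \sum_(s | edge_perm e s && all (fun p => subcycle p s) u) (-1) ^+ ((perm_prod u)^-1 * s)%g
  = \det (principal_submx (adjmx e) (~: tuple_psupp u)).
Proof.
move=> du; rewrite det_principal_adjmx (reindex_inj (mulgI (perm_prod u))) /=.
by apply: eq_big => [s|s _]; rewrite ?edge_perm_factor ?mulKg.
Qed.

Hypothesis e_sym : symmetric e.

Lemma sum_edge_perms_tuples z :
  \sum_(s | edge_perm e s)
     \sum_(u : z.-tuple 'S_n | disj_dcycle4k_tuple e u && all (fun p => subcycle p s) u)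
       (-1) ^+ ((perm_prod u)^-1 * s)%g
  = 2 ^+ z * \sum_(t : z.-tuple {set {set 'I_n}} | disj_4kcycle_tuple e t) det_del e t.
Proof.
rewrite (exchange_big_dep (@disj_dcycle4k_tuple n e z)) => [|s u _ /andP[] //] /=.
rewrite /det_del -(sum_disj_dcycle4k_tuples e_sym z
                     (fun W => \det (principal_submx (adjmx e) (~: W)))).
apply: eq_bigr => u du.
by rewrite -sum_edge_perms_through //; apply: eq_bigl => s; rewrite du.
Qed.

Variables (f : 'I_n -> bool) (m : nat).
Hypothesis f_bip : forall x y, e x y -> f x != f y.
Hypothesis cycles_le : forall Cs : {set {set {set 'I_n}}},
  (forall C, C \in Cs -> is_4kcycle e C) ->
  (forall C D, C \in Cs -> D \in Cs -> C != D -> [disjoint cyc_verts C & cyc_verts D]) ->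
  (#|Cs| <= m)%N.

Lemma edge_perm_expansion s : edge_perm e s ->
  1 = (-1) ^+ n./2 * \sum_(z < m.+1) 2 ^+ z / z`!%:R *
        \sum_(u : z.-tuple 'S_n | disj_dcycle4k_tuple e u && all (fun p => subcycle p s) u)
          (-1) ^+ ((perm_prod u)^-1 * s)%g :> rat.
Proof.
(* 1 = (-1)^c (1 - 2)^c, with c the number of 4k-cycles of s, expanded binomially. *)
move=> es; set c := #|dcycles4k e s|.
have sign_u z (u : z.-tuple 'S_n) : disj_dcycle4k_tuple e u ->
    (-1) ^+ ((perm_prod u)^-1 * s)%g = (-1) ^+ s * (-1) ^+ z :> rat.
  case/andP => du _; rewrite odd_permM odd_permV (odd_perm_prod_dcycle4k du) size_tuple.
  by rewrite signr_addb signr_odd mulrC.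
have -> : (-1) ^+ n./2 = (-1) ^+ c * (-1) ^+ s :> rat.
  by rewrite /c card_dcycles4k // -(sign_edge_perm f_bip) // -mulrA -expr2 sqrr_sign mulr1.
rewrite (eq_bigr (fun z : 'I_m.+1 => (-1) ^+ s * ((- 2) ^+ z / z`!%:R *
    #|[set t : z.-tuple 'S_n | all (mem (dcycles4k e s)) t & uniq t]|%:R))) => [|z _].
  rewrite -mulr_sumr sum_uniq_tuples_exp ?card_dcycles4k_le //.
  have -> : 1 - 2 = -1 :> rat by [].
  by rewrite -/c [X in _ * X]mulrC mulrACA -!expr2 !sqrr_sign mulr1.
rewrite (eq_bigr (fun _ => (-1) ^+ s * (-1) ^+ z)) => [|u /andP[du _]]; last exact: sign_u.
rewrite (eq_bigl [in [set t : z.-tuple 'S_n | all (mem (dcycles4k e s)) t & uniq t]]);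
  last by move=> u; rewrite inE dcycles4k_tupleE.
rewrite sumr_const (exprNn (2 : rat) z); move: #|_| => N.
move: ((-1) ^+ s) ((-1) ^+ z) (2 ^+ z) (z`!%:R^-1) => a b d k.
ring.
Qed.

End Expansion.

Theorem theorem1 (n : nat) (e : rel 'I_n) (m : nat) :
  simple_graph e -> bipartite e ->
  (forall Cs : {set {set {set 'I_n}}},
     (forall C, C \in Cs -> is_4kcycle e C) ->
     (forall C D, C \in Cs -> D \in Cs -> C != D ->
        [disjoint cyc_verts C & cyc_verts D]) ->
     (#|Cs| <= m)%N) ->
  permanent (adjmx e) =
    (if odd n then 0
     else (-1) ^+ (n./2) *
          \sum_(z < m.+1)
            (4 ^+ z / (z`!)%:R) *
            \sum_(t : z.-tuple {set {set 'I_n}} | disj_4kcycle_tuple e t)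
               det_del e t).
Proof.
move=> [e_sym _] [f f_bip] cycles_le.
rewrite permanent_adjmxE; case: ifP => [odd_n|_].
  by rewrite big_pred0 // => s; apply: contraTF odd_n => /(edge_perm_even f_bip).
rewrite (eq_bigr _ (fun s es => edge_perm_expansion f_bip cycles_le es)).
rewrite -mulr_sumr exchange_big /=.
congr (_ * _); apply: eq_bigr => z _.
rewrite -mulr_sumr sum_edge_perms_tuples // mulrCA !mulrA -exprMn.
by have -> : 2 * 2 = 4 :> rat by [].
Qed.
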